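(* Let $J=JCK(Z,\delta)$. Then $\dim_{\mathbb F}\mathrm{Inder}(J)=\dim_{\mathbb F}J=8\dim_{\mathbb F}Z$ (dimensions as cardinals).
   Context: Let $\mathbb F$ be a field of characteristic $\neq 2$, $Z$ a unital commutative associative $\mathbb F$-algebra, and $\delta$ a derivation of $Z$ such that $Z\delta(Z)=Z$ (the $\mathbb F$-span of all products $f\delta(g)$, $f,g\in Z$, is $Z$). The Cheng-Kac Jordan superalgebra $J=JCK(Z,\delta)=J_{\bar0}\oplus J_{\bar1}$ is defined as follows: $J_{\bar0}=Z1\oplus Zw_1\oplus Zw_2\oplus Zw_3$ and $J_{\bar1}=Zx\oplus Zx_1\oplus Zx_2\oplus Zx_3$ are free $Z$-modules of rank 4; $J_{\bar0}$ is the $Z$-algebra $(\mathbb F1\oplus\mathbb Fw_1\oplus\mathbb Fw_2\oplus\mathbb Fw_3)\otimes_{\mathbb F}Z$ with $1$ the identity, $w_1^2=w_2^2=1$, $w_3^2=-1$, $w_iw_j=0$ for $i\ne j$. For $f,g\in Z$ and $i,j\in\{1,2,3\}$ the remaining products are: $f(gx)=(fg)x$, $f(gx_j)=(fg)x_j$, $(fw_i)(gx)=(\delta(f)g)x_i$, $(fw_i)(gx_j)=-(fg)x_{i\times j}$, $(fx)(gx)=\delta(f)g-f\delta(g)$, $(fx)(gx_j)=-(fg)w_j$, $(fx_i)(gx)=(fg)w_i$, $(fx_i)(gx_j)=0$, extended by supercommutativity ($ab=(-1)^{|a||b|}ba$), where $x_{1\times2}=-x_{2\times1}=x_3$, $x_{1\times3}=-x_{3\times1}=x_2$,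 $x_{3\times2}=-x_{2\times3}=x_1$, $x_{i\times i}=0$. $D(a,b)$ is the map $c\mapsto a(bc)-(-1)^{|a||b|}b(ac)$, and $\mathrm{Inder}(J)$ is the span of all $D(a,b)$, $a,b\in J$ homogeneous. *)

From HB Require Import structures.
From mathcomp Require Import all_boot all_order all_algebra.
Set Implicit Arguments. Unset Strict Implicit. Unset Printing Implicit Defensive.
Import GRing.Theory.
Local Open Scope ring_scope.

(* Underlying F-vector space of the Cheng-Kac superalgebra JCK(Z, delta):
   J = J_0 (+) J_1, each a free Z-module of rank 4.
   Even part (a.1): coordinates w.r.t. 1, w1, w2, w3 (indices 0,1,2,3).
   Odd  part (a.2): coordinates w.r.t. x, x1, x2, x3 (indices 0,1,2,3). *)
Notation JCK Z := ({ffun 'I_4 -> Z} * {ffun 'I_4 -> Z})%type.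

Definition o4 (n : nat) : 'I_4 := inord n.

Section CK.
Variables (F : fieldType) (Z : comAlgType F) (delta : Z -> Z).

Definition ck_ee (a b : {ffun 'I_4 -> Z}) : {ffun 'I_4 -> Z} :=
  [ffun k : 'I_4 => match nat_of_ord k with
    | 0 => a (o4 0) * b (o4 0) + a (o4 1) * b (o4 1) + a (o4 2) * b (o4 2)
           - a (o4 3) * b (o4 3)
    | _ => a (o4 0) * b k + a k * b (o4 0) end].

(* J_0 x J_1 -> J_1 (and J_1 x J_0 -> J_1 by supercommutativity) *)
Definition ck_eo (a b : {ffun 'I_4 -> Z}) : {ffun 'I_4 -> Z} :=
  [ffun k : 'I_4 => match nat_of_ord k with
    | 0 => a (o4 0) * b (o4 0)
    | 1 => a (o4 0) * b (o4 1) + delta (a (o4 1)) * b (o4 0)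
           + a (o4 2) * b (o4 3) - a (o4 3) * b (o4 2)
    | 2 => a (o4 0) * b (o4 2) + delta (a (o4 2)) * b (o4 0)
           + a (o4 3) * b (o4 1) - a (o4 1) * b (o4 3)
    | _ => a (o4 0) * b (o4 3) + delta (a (o4 3)) * b (o4 0)
           + a (o4 2) * b (o4 1) - a (o4 1) * b (o4 2) end].

Definition ck_oo (a b : {ffun 'I_4 -> Z}) : {ffun 'I_4 -> Z} :=
  [ffun k : 'I_4 => match nat_of_ord k with
    | 0 => delta (a (o4 0)) * b (o4 0) - a (o4 0) * delta (b (o4 0))
    | _ => a k * b (o4 0) - a (o4 0) * b k end].

Definition ck_mul (a b : JCK Z) : JCK Z :=
  (ck_ee a.1 b.1 + ck_oo a.2 b.2, ck_eo a.1 b.2 + ck_eo b.1 a.2).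

Definition ck_homog (p : bool) (a : JCK Z) : Prop :=
  if p then a.1 = 0 else a.2 = 0.

Definition ck_D (p q : bool) (a b : JCK Z) (c : JCK Z) : JCK Z :=
  ck_mul a (ck_mul b c) - (if p && q then -1 else 1) *: ck_mul b (ck_mul a c).

Definition in_Inder (phi : JCK Z -> JCK Z) : Prop :=
  exists (n : nat) (p q : 'I_n -> bool) (a b : 'I_n -> JCK Z) (c : 'I_n -> F),
    (forall k, ck_homog (p k) (a k) /\ ck_homog (q k) (b k)) /\
    forall x, phi x = \sum_(k < n) c k *: ck_D (p k) (q k) (a k) (b k) x.

End CK.

Definition is_basis (F : fieldType) (V : lmodType F) (I : Type) (e : I -> V) : Prop :=
  (forall (n : nat) (f : 'I_n -> I) (c : 'I_n -> F), injective f ->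
     \sum_(k < n) c k *: e (f k) = 0 -> forall k, c k = 0) /\
  (forall v : V, exists (n : nat) (f : 'I_n -> I) (c : 'I_n -> F),
     v = \sum_(k < n) c k *: e (f k)).

Definition is_basis_fun (F : fieldType) (X : Type) (V : lmodType F)
    (S : (X -> V) -> Prop) (I : Type) (e : I -> X -> V) : Prop :=
  (forall i, S (e i)) /\
  (forall (n : nat) (f : 'I_n -> I) (c : 'I_n -> F), injective f ->
     (forall x, \sum_(k < n) c k *: e (f k) x = 0) -> forall k, c k = 0) /\
  (forall phi, S phi -> exists (n : nat) (f : 'I_n -> I) (c : 'I_n -> F),
     forall x, phi x = \sum_(k < n) c k *: e (f k) x).

(* The inner derivations of the Cheng-Kac superalgebra J = JCK(Z, delta)
   form an F-space isomorphic to J itself, so that both have a basis indexed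
   by 'I_8 * K whenever Z has a basis indexed by K.

   The isomorphism is an explicit map v |-> Phi v from J to maps J -> J,
   given in coordinates.  Phi is linear in v (Phi_linear); every D(a, b) with
   a, b homogeneous equals Phi v for an explicit v (D_Phi), so each element of
   Inder(J) is some Phi v (Inder_parametrized); conversely Phi sends each
   standard basis vector of J to a single D(a, b) (Phi_embed_in_Inder); and
   Phi v = 0 forces v = 0 (Phi_faithful), using 2 != 0 and Z delta(Z) = Z. *)

From HB Require Import structures.
From mathcomp Require Import all_boot all_order all_algebra.
From mathcomp Require Import ring.
Import GRing.Theory.
Set Implicit Arguments. Unset Strict Implicit. Unset Printing Implicit Defensive.
Local Open Scope ring_scope.

Section LinearAlgebra.
Variable F : fieldType.

Lemma linear_fun0 (U V : lmodType F) (f : U -> V) : linear f -> f 0 = 0.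
Proof. by move=> lf; have := lf (-1) 0 0; rewrite scaler0 addr0 scaleN1r addNr. Qed.

Lemma linear_funN (U V : lmodType F) (f : U -> V) : linear f -> forall u, f (- u) = - f u.
Proof. by move=> lf u; rewrite -scaleN1r -[_ *: u]addr0 lf linear_fun0 // addr0 scaleN1r. Qed.

Lemma linear_fun_sum (U V : lmodType F) (f : U -> V) : linear f ->
  forall n (c : 'I_n -> F) (u : 'I_n -> U),
  f (\sum_(k < n) c k *: u k) = \sum_(k < n) c k *: f (u k).
Proof.
move=> lf n c u; elim/big_rec2: _ => [|k y1 y2 _ <-]; first exact: linear_fun0.
exact: lf.
Qed.

Definition in_span (V : lmodType F) (I : Type) (e : I -> V) (v : V) : Prop :=
  exists (n : nat) (f : 'I_n -> I) (c : 'I_n -> F), v = \sum_(k < n) c k *: e (f k).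

Lemma span0 (V : lmodType F) (I : Type) (e : I -> V) : in_span e 0.
Proof.
exists 0%N, (fun k : 'I_0 => False_rect I (Bool.diff_false_true (ltn_ord k))), (fun _ => 0).
by rewrite big_ord0.
Qed.

Lemma spanD (V : lmodType F) (I : Type) (e : I -> V) (u v : V) :
  in_span e u -> in_span e v -> in_span e (u + v).
Proof.
move=> [n1 [f1 [c1 ->]]] [n2 [f2 [c2 ->]]].
exists (n1 + n2)%N, (fun k => match split k with inl j => f1 j | inr j => f2 j end),
  (fun k => match split k with inl j => c1 j | inr j => c2 j end).
rewrite big_split_ord /=; congr (_ + _); apply: eq_bigr => j _.
- by rewrite (unsplitK (inl j : 'I_n1 + 'I_n2)).
- by rewrite (unsplitK (inr j : 'I_n1 + 'I_n2)).
Qed.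

Lemma span_sum (V : lmodType F) (I : Type) (e : I -> V) (m : nat) (G : 'I_m -> V) :
  (forall i, in_span e (G i)) -> in_span e (\sum_(i < m) G i).
Proof. by move=> G_span; apply: (big_ind (in_span e)); [exact: span0 | exact: spanD |]. Qed.

Lemma free_subfamily (V : lmodType F) (K : Type) (e : K -> V) :
  (forall (n : nat) (f : 'I_n -> K) (c : 'I_n -> F), injective f ->
     \sum_(k < n) c k *: e (f k) = 0 -> forall k, c k = 0) ->
  forall n (g : 'I_n -> K) (c : 'I_n -> F) (P : pred 'I_n),
  {in P &, injective g} -> \sum_(k < n | P k) c k *: e (g k) = 0 ->
  forall k, P k -> c k = 0.
Proof.
move=> free n g c P ginj sum0 k Pk.
have Pk' : k \in P by [].
have := free #|P| (fun j => g (enum_val j)) (fun j => c (enum_val j)).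
move=> /(_ _ _ (enum_rank_in Pk' k)); rewrite enum_rankK_in //; apply.
- by move=> i j /ginj eq_ij; apply: enum_val_inj; apply: eq_ij; exact: enum_valP.
- by rewrite -(big_enum_val (A := P) (fun j => c j *: e (g j))).
Qed.

Section CoordinateBasis.
Variables (V W : lmodType F) (m : nat).
Variables (coord : 'I_m -> V -> W) (embed : 'I_m -> W -> V).
Hypothesis coord_linear : forall i, linear (coord i).
Hypothesis embed_linear : forall i, linear (embed i).
Hypothesis coord_embed : forall i j w, coord i (embed j w) = if i == j then w else 0.
Hypothesis embed_coord : forall v, v = \sum_(i < m) embed i (coord i v).

Lemma basis_of_coordinates (K : Type) (e : K -> W) :
  is_basis e -> is_basis (fun p : 'I_m * K => embed p.1 (e p.2)).
Proof.
move=> [free span]; split.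
- move=> n f c finj sum0 k.
  have block0 : \sum_(t < n | (f k).1 == (f t).1) c t *: e (f t).2 = 0.
    have := congr1 (coord (f k).1) sum0.
    rewrite linear_fun_sum // linear_fun0 // => coord_sum0; rewrite -[RHS]coord_sum0.
    rewrite big_mkcond; apply: eq_bigr => t _.
    by rewrite coord_embed; case: ifP; rewrite ?scaler0.
  apply: (free_subfamily free (g := fun t => (f t).2)
                         (P := fun t => (f k).1 == (f t).1) _ block0) => //.
  move=> t1 t2 /eqP eq1 /eqP eq2 eq12; apply: finj.
  by case: (f t1) (f t2) eq1 eq2 eq12 => [i1 k1] [i2 k2] /= -> -> ->.
- move=> v; rewrite (embed_coord v).
  apply: (span_sum (e := fun p : 'I_m * K => embed p.1 (e p.2))) => i.
  have [n [g [d ->]]] := span (coord i v).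
  rewrite linear_fun_sum //; exists n, (fun t => (i, g t)), d.
  by apply: eq_bigr.
Qed.
End CoordinateBasis.

Lemma basis_of_parametrization (V W : lmodType F) (X : Type)
    (T : V -> X -> W) (S : (X -> W) -> Prop) (I : Type) (e : I -> V) :
  (forall x, linear (T^~ x)) ->
  (forall v, (forall x, T v x = 0) -> v = 0) ->
  (forall i, S (T (e i))) ->
  (forall phi, S phi -> exists v, forall x, phi x = T v x) ->
  is_basis e -> is_basis_fun S (fun i => T (e i)).
Proof.
move=> T_linear T_inj T_in T_onto [free span]; split; [exact: T_in | split].
- move=> n f c finj sum0; apply: (free n f c finj); apply: T_inj => x.
  by rewrite (linear_fun_sum (T_linear x)).
- move=> phi /T_onto [v phiE]; have [n [f [c vE]]] := span v.
  by exists n, f, c => x; rewrite phiE vE (linear_fun_sum (T_linear x)).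
Qed.

End LinearAlgebra.

Lemma o4K n : (n < 4)%N -> nat_of_ord (o4 n) = n.
Proof. by move=> lt_n4; rewrite /o4 inordK. Qed.

Lemma ord4P (k : 'I_4) : k = o4 0 \/ k = o4 1 \/ k = o4 2 \/ k = o4 3.
Proof.
case: k => [[|[|[|[|n]]]] lt_k4] //;
  [left | right; left | right; right; left | right; right; right];
  by apply/val_inj; rewrite /= o4K.
Qed.

Definition mk4 (T : Type) (x0 x1 x2 x3 : T) : {ffun 'I_4 -> T} :=
  [ffun i : 'I_4 => match nat_of_ord i with 0 => x0 | 1 => x1 | 2 => x2 | _ => x3 end].

Lemma mk4_0 (T : Type) (x0 x1 x2 x3 : T) : mk4 x0 x1 x2 x3 (o4 0) = x0.
Proof. by rewrite ffunE o4K. Qed.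
Lemma mk4_1 (T : Type) (x0 x1 x2 x3 : T) : mk4 x0 x1 x2 x3 (o4 1) = x1.
Proof. by rewrite ffunE o4K. Qed.
Lemma mk4_2 (T : Type) (x0 x1 x2 x3 : T) : mk4 x0 x1 x2 x3 (o4 2) = x2.
Proof. by rewrite ffunE o4K. Qed.
Lemma mk4_3 (T : Type) (x0 x1 x2 x3 : T) : mk4 x0 x1 x2 x3 (o4 3) = x3.
Proof. by rewrite ffunE o4K. Qed.

Lemma mk4_eta (T : Type) (f : {ffun 'I_4 -> T}) :
  f = mk4 (f (o4 0)) (f (o4 1)) (f (o4 2)) (f (o4 3)).
Proof.
apply/ffunP => k; case: (ord4P k) => [->|[->|[->|->]]];
  by rewrite ?(mk4_0, mk4_1, mk4_2, mk4_3).
Qed.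

Lemma mk4_inj (T : Type) (x0 x1 x2 x3 y0 y1 y2 y3 : T) :
  mk4 x0 x1 x2 x3 = mk4 y0 y1 y2 y3 -> [/\ x0 = y0, x1 = y1, x2 = y2 & x3 = y3].
Proof.
move=> eq_xy; have at_k k : mk4 x0 x1 x2 x3 k = mk4 y0 y1 y2 y3 k by rewrite eq_xy.
by split; [move: (at_k (o4 0)) | move: (at_k (o4 1)) | move: (at_k (o4 2)) | move: (at_k (o4 3))];
  rewrite ?(mk4_0, mk4_1, mk4_2, mk4_3).
Qed.

Section JCKCoordinates.
Variables (F : fieldType) (V : lmodType F).

Definition jck (x0 x1 x2 x3 y0 y1 y2 y3 : V) : JCK V := (mk4 x0 x1 x2 x3, mk4 y0 y1 y2 y3).

Lemma jck_eta (u : JCK V) :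
  u = jck (u.1 (o4 0)) (u.1 (o4 1)) (u.1 (o4 2)) (u.1 (o4 3))
          (u.2 (o4 0)) (u.2 (o4 1)) (u.2 (o4 2)) (u.2 (o4 3)).
Proof. by case: u => u1 u2; rewrite /jck -!mk4_eta. Qed.

Lemma jck_inj (x0 x1 x2 x3 y0 y1 y2 y3 x0' x1' x2' x3' y0' y1' y2' y3' : V) :
  jck x0 x1 x2 x3 y0 y1 y2 y3 = jck x0' x1' x2' x3' y0' y1' y2' y3' ->
  [/\ x0 = x0', x1 = x1', x2 = x2' & x3 = x3'] /\ [/\ y0 = y0', y1 = y1', y2 = y2' & y3 = y3'].
Proof. by case=> eq_x eq_y; split; [exact: mk4_inj eq_x | exact: mk4_inj eq_y]. Qed.

Lemma mk4_zeros : mk4 0 0 0 0 = 0 :> {ffun 'I_4 -> V}.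
Proof. by rewrite [RHS]mk4_eta !ffunE. Qed.

Lemma jck0 : jck 0 0 0 0 0 0 0 0 = 0.
Proof. by rewrite /jck mk4_zeros. Qed.

Lemma mk4_add (x0 x1 x2 x3 y0 y1 y2 y3 : V) :
  mk4 x0 x1 x2 x3 + mk4 y0 y1 y2 y3 = mk4 (x0 + y0) (x1 + y1) (x2 + y2) (x3 + y3).
Proof.
apply/ffunP => k; rewrite ffunE; case: (ord4P k) => [->|[->|[->|->]]];
  by rewrite ?(mk4_0, mk4_1, mk4_2, mk4_3).
Qed.

Lemma mk4_opp (x0 x1 x2 x3 : V) : - mk4 x0 x1 x2 x3 = mk4 (- x0) (- x1) (- x2) (- x3).
Proof.
apply/ffunP => k; rewrite ffunE; case: (ord4P k) => [->|[->|[->|->]]];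
  by rewrite ?(mk4_0, mk4_1, mk4_2, mk4_3).
Qed.

Lemma mk4_scale a (x0 x1 x2 x3 : V) :
  a *: mk4 x0 x1 x2 x3 = mk4 (a *: x0) (a *: x1) (a *: x2) (a *: x3).
Proof.
apply/ffunP => k; rewrite ffunE; case: (ord4P k) => [->|[->|[->|->]]];
  by rewrite ?(mk4_0, mk4_1, mk4_2, mk4_3).
Qed.

Lemma jck_add (x0 x1 x2 x3 x4 x5 x6 x7 y0 y1 y2 y3 y4 y5 y6 y7 : V) :
  jck x0 x1 x2 x3 x4 x5 x6 x7 + jck y0 y1 y2 y3 y4 y5 y6 y7 =
  jck (x0 + y0) (x1 + y1) (x2 + y2) (x3 + y3) (x4 + y4) (x5 + y5) (x6 + y6) (x7 + y7).
Proof. by rewrite /jck; congr (_, _); rewrite /= mk4_add. Qed.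

Lemma jck_opp (x0 x1 x2 x3 x4 x5 x6 x7 : V) :
  - jck x0 x1 x2 x3 x4 x5 x6 x7 = jck (- x0) (- x1) (- x2) (- x3) (- x4) (- x5) (- x6) (- x7).
Proof. by rewrite /jck; congr (_, _); rewrite /= mk4_opp. Qed.

Lemma jck_scale a (x0 x1 x2 x3 x4 x5 x6 x7 : V) :
  a *: jck x0 x1 x2 x3 x4 x5 x6 x7 =
  jck (a *: x0) (a *: x1) (a *: x2) (a *: x3) (a *: x4) (a *: x5) (a *: x6) (a *: x7).
Proof. by rewrite /jck; congr (_, _); rewrite /= mk4_scale. Qed.

Definition embed8 (i : 'I_8) (v : V) : JCK V :=
  ([ffun t : 'I_4 => if (t : nat) == i then v else 0],
   [ffun t : 'I_4 => if (t + 4)%N == i then v else 0]).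

Definition coord8 (i : 'I_8) (u : JCK V) : V :=
  if (i < 4)%N then u.1 (inord i) else u.2 (inord (i - 4)).

Lemma embed8_jck (i : 'I_8) (v : V) :
  embed8 i v = jck (if 0%N == i then v else 0) (if 1%N == i then v else 0)
                   (if 2%N == i then v else 0) (if 3%N == i then v else 0)
                   (if 4%N == i then v else 0) (if 5%N == i then v else 0)
                   (if 6%N == i then v else 0) (if 7%N == i then v else 0).
Proof. by rewrite [LHS]jck_eta /embed8 /= !ffunE !o4K. Qed.

Lemma embed8_linear i : linear (embed8 i).
Proof.
move=> a v w; apply: injective_projections; apply/ffunP => t; rewrite !ffunE;
  by case: ifP; rewrite ?scaler0 ?addr0.
Qed.

Lemma coord8_linear i : linear (coord8 i).
Proof. by move=> a u w; rewrite /coord8; case: ifP => _; rewrite !ffunE. Qed.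

Lemma coord8_embed8 (i j : 'I_8) (v : V) : coord8 i (embed8 j v) = if i == j then v else 0.
Proof.
rewrite /coord8 /embed8; case: ifP => lt_i4; rewrite ffunE.
  by rewrite (@inordK 3 i).
have le4i : (4 <= i)%N by rewrite leqNgt lt_i4.
by rewrite (@inordK 3 (i - 4)) ?subnK // ltn_subLR // (ltn_ord i).
Qed.

Lemma embed8_coord8 (u : JCK V) : u = \sum_(i < 8) embed8 i (coord8 i u).
Proof.
have sum_fst (G : 'I_8 -> JCK V) : (\sum_(i < 8) G i).1 = \sum_(i < 8) (G i).1.
  by elim/big_rec2: _ => // i y1 y2 _ <-.
have sum_snd (G : 'I_8 -> JCK V) : (\sum_(i < 8) G i).2 = \sum_(i < 8) (G i).2.
  by elim/big_rec2: _ => // i y1 y2 _ <-.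
apply: injective_projections; rewrite ?(sum_fst, sum_snd); apply/ffunP => t;
  rewrite sum_ffunE.
- rewrite (bigD1 (widen_ord (isT : (4 <= 8)%N) t)) //= big1 => [|i ne_it].
    by rewrite ffunE eqxx addr0 /coord8 /= ltn_ord inord_val.
  rewrite ffunE; case: eqP => // eq_ti; case/eqP: ne_it; exact/val_inj.
- have lt_t8 : (t + 4 < 8)%N by rewrite (ltn_add2r 4 t 4).
  rewrite (bigD1 (Ordinal lt_t8)) //= big1 => [|i ne_it].
    by rewrite ffunE eqxx addr0 /coord8 /= ltnNge leq_addl /= addnK inord_val.
  rewrite ffunE; case: eqP => // eq_ti; case/eqP: ne_it; exact/val_inj.
Qed.

Lemma jck_basis (K : Type) (e : K -> V) :
  is_basis e -> is_basis (fun p : 'I_8 * K => embed8 p.1 (e p.2)).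
Proof.
exact: (basis_of_coordinates coord8_linear embed8_linear coord8_embed8 embed8_coord8).
Qed.

End JCKCoordinates.

Section ChengKac.
Variables (F : fieldType) (Z : comAlgType F) (delta : {linear Z -> Z}).
Hypothesis delta_leibniz : forall f g : Z, delta (f * g) = delta f * g + f * delta g.

Local Notation ev u i := (u.1 (o4 i)).
Local Notation od u i := (u.2 (o4 i)).

Lemma deltaD (f g : Z) : delta (f + g) = delta f + delta g. Proof. exact: raddfD. Qed.
Lemma deltaN (f : Z) : delta (- f) = - delta f. Proof. exact: raddfN. Qed.
Lemma deltaZ a (f : Z) : delta (a *: f) = a *: delta f. Proof. exact: linearZ. Qed.
Lemma delta0 : delta 0 = 0. Proof. exact: raddf0. Qed.
Lemma delta1 : delta 1 = 0.
Proof.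
have := delta_leibniz 1 1; rewrite !mulr1 mul1r => d11.
by apply: (addrI (delta 1)); rewrite addr0 -d11.
Qed.

Lemma ck_mul_jck (a0 a1 a2 a3 a4 a5 a6 a7 b0 b1 b2 b3 b4 b5 b6 b7 : Z) :
  ck_mul delta (jck a0 a1 a2 a3 a4 a5 a6 a7) (jck b0 b1 b2 b3 b4 b5 b6 b7) =
  jck (a0 * b0 + a1 * b1 + a2 * b2 - a3 * b3 + (delta a4 * b4 - a4 * delta b4))
      (a0 * b1 + a1 * b0 + (a5 * b4 - a4 * b5))
      (a0 * b2 + a2 * b0 + (a6 * b4 - a4 * b6))
      (a0 * b3 + a3 * b0 + (a7 * b4 - a4 * b7))
      (a0 * b4 + b0 * a4)
      (a0 * b5 + delta a1 * b4 + a2 * b7 - a3 * b6 + (b0 * a5 + delta b1 * a4 + b2 * a7 - b3 * a6))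
      (a0 * b6 + delta a2 * b4 + a3 * b5 - a1 * b7 + (b0 * a6 + delta b2 * a4 + b3 * a5 - b1 * a7))
      (a0 * b7 + delta a3 * b4 + a2 * b5 - a1 * b6 + (b0 * a7 + delta b3 * a4 + b2 * a5 - b1 * a6)).
Proof.
rewrite /ck_mul /jck /=; congr (_, _); apply/ffunP => k; rewrite !ffunE;
  case: (ord4P k) => [->|[->|[->|->]]]; rewrite ?o4K //= ?(mk4_0, mk4_1, mk4_2, mk4_3).
Qed.

Definition phi_coords (z0 z1 z2 z3 y0 y1 y2 y3 e0 e1 e2 e3 f0 f1 f2 f3 : Z) : JCK Z :=
  jck (z0 * f0 - y1 * f1 - y2 * f2 + y3 * f3 - 2%:R * (y0 * delta e0))
      (z2 * e3 - z3 * e2 + (delta y1 * f0 - y1 * delta f0) + y2 * f3 - y3 * f2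
         - 2%:R * (y0 * delta e1))
      (- (z1 * e3) + z3 * e1 - y1 * f3 + (delta y2 * f0 - y2 * delta f0) + y3 * f1
         - 2%:R * (y0 * delta e2))
      (- (z1 * e2) + z2 * e1 - y1 * f2 + y2 * f1 + (delta y3 * f0 - y3 * delta f0)
         - 2%:R * (y0 * delta e3))
      (- (y1 * e1) - y2 * e2 + y3 * e3 + delta y0 * f0 - 2%:R * (y0 * delta f0))
      (- (z0 * e1) + delta z1 * f0 + z2 * f3 - z3 * f2 - y1 * delta e0
         + y2 * delta e3 - y3 * delta e2 - delta y0 * f1 - 2%:R * (y0 * delta f1))
      (- (z0 * e2) - z1 * f3 + delta z2 * f0 + z3 * f1 - y1 * delta e3
         - y2 * delta e0 + y3 * delta e1 - delta y0 * f2 - 2%:R * (y0 * delta f2))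
      (- (z0 * e3) - z1 * f2 + z2 * f1 + delta z3 * f0 - y1 * delta e2
         + y2 * delta e1 - y3 * delta e0 - delta y0 * f3 - 2%:R * (y0 * delta f3)).

Definition Phi (v c : JCK Z) : JCK Z :=
  phi_coords (ev v 0) (ev v 1) (ev v 2) (ev v 3) (od v 0) (od v 1) (od v 2) (od v 3)
             (ev c 0) (ev c 1) (ev c 2) (ev c 3) (od c 0) (od c 1) (od c 2) (od c 3).

Lemma Phi_jck (z0 z1 z2 z3 y0 y1 y2 y3 e0 e1 e2 e3 f0 f1 f2 f3 : Z) :
  Phi (jck z0 z1 z2 z3 y0 y1 y2 y3) (jck e0 e1 e2 e3 f0 f1 f2 f3) =
  phi_coords z0 z1 z2 z3 y0 y1 y2 y3 e0 e1 e2 e3 f0 f1 f2 f3.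
Proof. by rewrite /Phi /= !(mk4_0, mk4_1, mk4_2, mk4_3). Qed.

Lemma Phi_linear (c : JCK Z) : linear (Phi^~ c).
Proof.
move=> a u v; rewrite [u]jck_eta [v]jck_eta [c]jck_eta.
rewrite jck_scale jck_add !Phi_jck /phi_coords jck_scale jck_add.
have [s scale_s] : exists s : Z, forall f : Z, a *: f = s * f.
  by exists a%:A => f; rewrite mulr_algl.
by congr jck; rewrite ?(deltaD, deltaZ) !scale_s; ring.
Qed.

(* The vector [v] with [D(a, b) = Phi v], for [a], [b] homogeneous of the
   parities (even/odd) indicated by the name. *)
Definition ee_vector (a b : JCK Z) : JCK Z :=
  jck 0 (ev a 2 * ev b 3 - ev a 3 * ev b 2) (ev a 3 * ev b 1 - ev a 1 * ev b 3)
        (ev a 2 * ev b 1 - ev a 1 * ev b 2) 0 0 0 0.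

Definition eo_vector (a b : JCK Z) : JCK Z :=
  jck (delta (ev a 0) * od b 0 + ev a 1 * od b 1 + ev a 2 * od b 2 - ev a 3 * od b 3) 0 0 0
      0 (ev a 1 * od b 0) (ev a 2 * od b 0) (ev a 3 * od b 0).

Definition oo_vector (a b : JCK Z) : JCK Z :=
  jck 0 (od a 0 * od b 1 + od b 0 * od a 1) (od a 0 * od b 2 + od b 0 * od a 2)
        (od a 0 * od b 3 + od b 0 * od a 3) (od a 0 * od b 0) 0 0 0.

Ltac D_by_coordinates :=
  rewrite /ck_D ?scale1r ?scaleN1r ?opprK !ck_mul_jck ?jck_opp jck_add;
  rewrite /ee_vector /eo_vector /oo_vector /= ?(mk4_0, mk4_1, mk4_2, mk4_3);
  rewrite Phi_jck /phi_coords; congr jck;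
  rewrite ?(deltaD, deltaN, delta0, delta_leibniz); ring.

Lemma D_even_even (a b : JCK Z) : a.2 = 0 -> b.2 = 0 ->
  forall c, ck_D delta false false a b c = Phi (ee_vector a b) c.
Proof.
move=> a_even b_even c; rewrite [a]jck_eta [b]jck_eta [c]jck_eta a_even b_even !ffunE.
by D_by_coordinates.
Qed.

Lemma D_even_odd (a b : JCK Z) : a.2 = 0 -> b.1 = 0 ->
  forall c, ck_D delta false true a b c = Phi (eo_vector a b) c.
Proof.
move=> a_even b_odd c; rewrite [a]jck_eta [b]jck_eta [c]jck_eta a_even b_odd !ffunE.
by D_by_coordinates.
Qed.

Lemma D_odd_odd (a b : JCK Z) : a.1 = 0 -> b.1 = 0 ->
  forall c, ck_D delta true true a b c = Phi (oo_vector a b) c.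
Proof.
move=> a_odd b_odd c; rewrite [a]jck_eta [b]jck_eta [c]jck_eta a_odd b_odd !ffunE.
by D_by_coordinates.
Qed.

Lemma ck_D_skew (a b c : JCK Z) :
  ck_D delta true false a b c = - ck_D delta false true b a c.
Proof. by rewrite /ck_D !scale1r opprB. Qed.

Lemma D_odd_even (a b : JCK Z) : a.1 = 0 -> b.2 = 0 ->
  forall c, ck_D delta true false a b c = Phi (- eo_vector b a) c.
Proof.
by move=> a_odd b_even c; rewrite ck_D_skew D_even_odd // (linear_funN (Phi_linear c)).
Qed.

Definition D_vector (p q : bool) (a b : JCK Z) : JCK Z :=
  match p, q with
  | false, false => ee_vector a b
  | false, true => eo_vector a b
  | true, false => - eo_vector b a
  | true, true => oo_vector a b
  end.

Lemma D_Phi p q (a b : JCK Z) : ck_homog p a -> ck_homog q b ->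
  forall c, ck_D delta p q a b c = Phi (D_vector p q a b) c.
Proof.
case: p; case: q => /= homog_a homog_b.
- exact: D_odd_odd.
- exact: D_odd_even.
- exact: D_even_odd.
- exact: D_even_even.
Qed.

Lemma in_Inder_D (phi : JCK Z -> JCK Z) p q (a b : JCK Z) :
  ck_homog p a -> ck_homog q b -> (forall x, phi x = ck_D delta p q a b x) ->
  in_Inder delta phi.
Proof.
move=> homog_a homog_b phiE.
exists 1%N, (fun=> p), (fun=> q), (fun=> a), (fun=> b), (fun=> 1).
by split=> // x; rewrite big_ord1 scale1r.
Qed.

Lemma Inder_parametrized (phi : JCK Z -> JCK Z) :
  in_Inder delta phi -> exists v, forall x, phi x = Phi v x.
Proof.
move=> [n [p [q [a [b [c [homog phiE]]]]]]].
exists (\sum_(k < n) c k *: D_vector (p k) (q k) (a k) (b k)) => x.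
rewrite phiE (linear_fun_sum (Phi_linear x)); apply: eq_bigr => k _.
by have [homog_a homog_b] := homog k; rewrite D_Phi.
Qed.

(* Each basis vector [embed8 i u] of [J] parametrizes a single [D(a, b)]:
   with [w_i], [x], [x_i] the standard generators,
   [1 <-> D(w1, u x1)], [w_i <-> D(x, u x_i)], [x <-> D(x, u x)],
   [x_i <-> D(w_i, u x)]. *)
Lemma Phi_embed_in_Inder (i : 'I_8) (u : Z) : in_Inder delta (Phi (embed8 i u)).
Proof.
suff [p [q [a [b [homog_a homog_b ->]]]]] : exists p q a b,
    [/\ ck_homog p a, ck_homog q b & embed8 i u = D_vector p q a b].
  by apply: (in_Inder_D homog_a homog_b) => x; rewrite D_Phi.
rewrite embed8_jck; case: i => [[|[|[|[|[|[|[|[|m]]]]]]]] lt_i8] //=;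
  [ exists false, true, (jck 0 1 0 0 0 0 0 0), (jck 0 0 0 0 0 u 0 0)
  | exists true, true, (jck 0 0 0 0 1 0 0 0), (jck 0 0 0 0 0 u 0 0)
  | exists true, true, (jck 0 0 0 0 1 0 0 0), (jck 0 0 0 0 0 0 u 0)
  | exists true, true, (jck 0 0 0 0 1 0 0 0), (jck 0 0 0 0 0 0 0 u)
  | exists true, true, (jck 0 0 0 0 1 0 0 0), (jck 0 0 0 0 u 0 0 0)
  | exists false, true, (jck 0 1 0 0 0 0 0 0), (jck 0 0 0 0 u 0 0 0)
  | exists false, true, (jck 0 0 1 0 0 0 0 0), (jck 0 0 0 0 u 0 0 0)
  | exists false, true, (jck 0 0 0 1 0 0 0 0), (jck 0 0 0 0 u 0 0 0) ].
all: split; rewrite /= ?mk4_zeros // /D_vector /ee_vector /eo_vector /oo_vector /=.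
all: rewrite ?(mk4_0, mk4_1, mk4_2, mk4_3) ?jck_opp; congr jck; rewrite ?delta0; ring.
Qed.

(* [Phi] is injective: testing [Phi v] on [w1], [w2], [w3] kills all
   coordinates of [v] except the [x]-coordinate [y0], and testing it on
   [g 1] gives [2 y0 delta(g) = 0]; as [2 != 0] and [Z delta(Z) = Z],
   [y0 = 0] as well. *)
Lemma Phi_faithful (v : JCK Z) :
  (2%:R : F) != 0 ->
  (forall z : Z, exists (n : nat) (f g : 'I_n -> Z), z = \sum_(k < n) f k * delta (g k)) ->
  (forall c, Phi v c = 0) -> v = 0.
Proof.
move=> two_neq0 delta_span; rewrite [v]jck_eta -jck0.
move: (ev v 0) (ev v 1) (ev v 2) (ev v 3) (od v 0) (od v 1) (od v 2) (od v 3).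
move=> z0 z1 z2 z3 y0 y1 y2 y3 Phi0.
have vanish (e0 e1 e2 e3 f0 f1 f2 f3 : Z) :
    phi_coords z0 z1 z2 z3 y0 y1 y2 y3 e0 e1 e2 e3 f0 f1 f2 f3 = jck 0 0 0 0 0 0 0 0.
  by rewrite -Phi_jck Phi0.
have /jck_inj[[_ _ ez3 ez2] [ey1 ez0 _ _]] := vanish 0 1 0 0 0 0 0 0.
have /jck_inj[[_ _ _ ez1] [ey2 _ _ _]] := vanish 0 0 1 0 0 0 0 0.
have /jck_inj[_ [ey3 _ _ _]] := vanish 0 0 0 1 0 0 0 0.
have y0_delta (g : Z) : y0 * delta g = 0.
  have /jck_inj[[eg _ _ _] _] := vanish g 0 0 0 0 0 0 0.
  have : (y0 * delta g) *+ 2 = 0 by rewrite -[RHS]oppr0 -eg; ring.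
  by rewrite -scaler_nat; move/eqP; rewrite scaler_eq0 (negbTE two_neq0) => /eqP.
have -> : y0 = 0.
  have [n [f [g one]]] := delta_span 1.
  by rewrite -[y0]mulr1 one mulr_sumr big1 // => k _; rewrite mulrCA y0_delta mulr0.
have neg_z0 : - z0 = 0 by rewrite -ez0 ?delta0 ?delta1; ring.
have neg_z1 : - z1 = 0 by rewrite -ez1 ?delta0 ?delta1; ring.
have z2_0 : z2 = 0 by rewrite -ez2 ?delta0 ?delta1; ring.
have z3_0 : z3 = 0 by rewrite -ez3 ?delta0 ?delta1; ring.
have neg_y1 : - y1 = 0 by rewrite -ey1 ?delta0 ?delta1; ring.
have neg_y2 : - y2 = 0 by rewrite -ey2 ?delta0 ?delta1; ring.
have y3_0 : y3 = 0 by rewrite -ey3 ?delta0 ?delta1; ring.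
rewrite -[z0]opprK -[z1]opprK -[y1]opprK -[y2]opprK.
by rewrite neg_z0 neg_z1 neg_y1 neg_y2 z2_0 z3_0 y3_0 oppr0.
Qed.

End ChengKac.

Unset Implicit Arguments.

Theorem corollary4p5 (F : fieldType) (Z : comAlgType F) (delta : {linear Z -> Z}) :
  (2%:R : F) != 0 ->
  (forall f g : Z, delta (f * g) = delta f * g + f * delta g) ->
  (forall z : Z, exists (n : nat) (f g : 'I_n -> Z),
     z = \sum_(k < n) f k * delta (g k)) ->
  forall (K : Type) (eZ : K -> Z), is_basis eZ ->
  exists (I IJ : Type) (eI : I -> JCK Z -> JCK Z) (eJ : IJ -> JCK Z),
    is_basis_fun (in_Inder delta) eI /\ is_basis eJ /\
    (exists h : I -> IJ, bijective h) /\
    (exists h : IJ -> ('I_8 * K)%type, bijective h).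
Proof.
move=> two_neq0 leibniz delta_span K eZ eZ_basis.
(* Both bases are indexed by ['I_8 * K]: that of [J] by coordinates, that of
   [Inder(J)] as its image under [Phi]. *)
pose eJ (p : 'I_8 * K) : JCK Z := embed8 p.1 (eZ p.2).
have eJ_basis : is_basis eJ := jck_basis eZ_basis.
exists ('I_8 * K)%type, ('I_8 * K)%type, (fun p => Phi delta (eJ p)), eJ.
split; last by split=> //; split; exists id; exists id.
apply: basis_of_parametrization eJ_basis.
- exact: Phi_linear.
- by move=> v; apply: Phi_faithful.
- by move=> [i k]; apply: Phi_embed_in_Inder.
- exact: Inder_parametrized.
Qed.
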